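(* Let $n\ge 1$, let $\boldsymbol{u}^\star\in\mathbb{R}^n\setminus\{\boldsymbol{0}\}$, and define $f:\mathbb{R}^n\to\mathbb{R}$ by $f(\boldsymbol{u})=\frac12\|\boldsymbol{u}\boldsymbol{u}^{\mathrm T}-\boldsymbol{u}^\star{\boldsymbol{u}^\star}^{\mathrm T}\|_1$. Then the set of stationary points of $f$ is $$\{\boldsymbol{u}\in\mathbb{R}^n:\boldsymbol{0}\in\partial f(\boldsymbol{u})\}=\Big\{\boldsymbol{u}\in\mathbb{R}^n:\ |u_i|\le|u_i^\star|\ \text{for all } i\in[n],\ \ \sum_{i:\,u_i^\star\neq 0}\operatorname{sgn}(u_i^\star)\,u_i=0\Big\}\cup\{\boldsymbol{u}^\star,-\boldsymbol{u}^\star\}.$$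
   Context: For a matrix $\boldsymbol{X}$, $\|\boldsymbol{X}\|_1=\sum_{i,j}|x_{ij}|$ (entrywise $\ell_1$-norm). $[n]=\{1,\dots,n\}$. $\partial f$ denotes the subdifferential of $f$; since $f$ is locally Lipschitz and subdifferentially regular, the Fréchet, limiting and Clarke subdifferentials of $f$ coincide, and any of them may be used. Explicitly, $\partial f(\boldsymbol{u})=\{\boldsymbol{Z}\boldsymbol{u}:\boldsymbol{Z}\text{ symmetric},\ \boldsymbol{Z}\in\operatorname{Sign}(\boldsymbol{u}\boldsymbol{u}^{\mathrm T}-\boldsymbol{u}^\star{\boldsymbol{u}^\star}^{\mathrm T})\}$, where $\operatorname{Sign}(x)=\{x/|x|\}$ for $x\ne0$, $\operatorname{Sign}(0)=[-1,1]$, applied entrywise. A point $\boldsymbol{u}$ is stationary if $\boldsymbol{0}\in\partial f(\boldsymbol{u})$. (The condition $|u_i|\le|u_i^\star|$ forces $u_i=0$ whenever $u_i^\star=0$.) *)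

From HB Require Import structures.
From mathcomp Require Import all_boot all_order all_algebra.
From mathcomp Require Import reals.
Set Implicit Arguments. Unset Strict Implicit. Unset Printing Implicit Defensive.
Import Order.TTheory GRing.Theory Num.Theory.
Local Open Scope ring_scope.

Definition in_Sign (R : realType) (x z : R) : Prop :=
  if x != 0 then z = x / `|x| else -1 <= z <= 1.

Definition lossmx (R : realType) (n : nat) (u us : 'cV[R]_n) : 'M[R]_n :=
  u *m u^T - us *m us^T.

(* Subdifferential of f(u) = 1/2 || u u^T - us us^T ||_1 (entrywise l1),
   as given explicitly in the context:
   { Z u : Z symmetric, Z \in Sign(u u^T - us us^T) entrywise }. *)
Definition subdiff (R : realType) (n : nat) (us u : 'cV[R]_n) (g : 'cV[R]_n) : Prop :=
  exists Z : 'M[R]_n, Z^T = Z /\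
    (forall i j, in_Sign (lossmx u us i j) (Z i j)) /\ g = Z *m u.

Definition stationary (R : realType) (n : nat) (us u : 'cV[R]_n) : Prop :=
  subdiff us u 0.

From HB Require Import structures.
From mathcomp Require Import all_boot all_order all_algebra.
From mathcomp Require Import reals ring lra.
Import Order.TTheory GRing.Theory Num.Theory.
Local Open Scope ring_scope.

Set Implicit Arguments.
Unset Strict Implicit.
Unset Printing Implicit Defensive.

(* Conjugating by the signs of [us] reduces everything to a target [s >= 0].
   There let [Z] be a symmetric sign matrix of [u u^T - s s^T] with [Z u = 0];
   everything is invariant under [u |-> -u].  A row [l] with [|u l| < s l]
   equals [-1] on the support of [u] (as then [u l u m < s l s m]), which
   forces [sum u = 0].  A coordinate with [s i < u i] is impossible: if no
   [0 < u l < s l] exists, row [i] of [Z u] is termwise nonnegative with a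
   positive [i]-th term; otherwise row [i] minus row [l] is termwise
   nonnegative, so its terms vanish, and those at [i] and [l] give
   [Z l i = 1] and [Z i l = -1].  If [|u| = s], either [u = +-s] or [u] has
   both signs, and the rows at a positive and at a negative coordinate give
   [sum u >= 0] and [sum u <= 0].  Conversely [Z = -1] and [Z = 0] are
   certificates. *)

Section SignCertificate.
Variables (R : realDomainType) (n : nat).

Definition loss_entry (s u : 'I_n -> R) (i j : 'I_n) : R :=
  u i * u j - s i * s j.

Record sign_certificate (s u : 'I_n -> R) (Z : 'I_n -> 'I_n -> R) : Prop :=
  SignCertificate {
    scert_sym : forall i j, Z i j = Z j i;
    scert_norm : forall i j, `|Z i j| <= 1;
    scert_loss : forall i j,
      Z i j * loss_entry s u i j = `|loss_entry s u i j|;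
    scert_ker : forall i, \sum_j Z i j * u j = 0 }.

Lemma sign_certificate_opp (s u : 'I_n -> R) (Z : 'I_n -> 'I_n -> R) :
  sign_certificate s u Z -> sign_certificate s (fun i => - u i) Z.
Proof.
case=> Zsym Znorm Zloss Zker; split=> // [i j|i].
  by rewrite /loss_entry mulrNN; apply: Zloss.
by under eq_bigr do rewrite mulrN; rewrite sumrN Zker oppr0.
Qed.

Lemma sign_certificate_flip (b : 'I_n -> bool) (s u s' u' : 'I_n -> R)
    (Z : 'I_n -> 'I_n -> R) :
  let d i : R := (-1) ^+ b i in
  (forall i, s' i = d i * s i) -> (forall i, u' i = d i * u i) ->
  sign_certificate s u Z ->
  sign_certificate s' u' (fun i j => d i * d j * Z i j).
Proof.
move=> d s'E u'E [Zsym Znorm Zloss Zker].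
have lossE i j : loss_entry s' u' i j = d i * d j * loss_entry s u i j.
  by rewrite /loss_entry !s'E !u'E; ring.
have dd i : d i * d i = 1 by rewrite /d -expr2 sqrr_sign.
split=> [i j|i j|i j|i].
- by rewrite Zsym [d i * _]mulrC.
- by rewrite !normrM !normr_sign !mul1r.
- rewrite lossE !normrM !normr_sign !mul1r -Zloss.
  by rewrite -[RHS]mul1r -(dd i) -[RHS]mul1r -(dd j); ring.
- transitivity (d i * \sum_j Z i j * u j); last by rewrite Zker mulr0.
  rewrite mulr_sumr; apply: eq_bigr => j _; rewrite u'E.
  by rewrite -[Z i j * _]mul1r -(dd j); ring.
Qed.

Section NonnegativeTarget.
Variables (s u : 'I_n -> R) (Z : 'I_n -> 'I_n -> R).
Hypotheses (s_ge0 : forall i, 0 <= s i) (cert : sign_certificate s u Z).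

Lemma scert_bounds i j : -1 <= Z i j <= 1.
Proof. by rewrite -ler_norml (scert_norm cert). Qed.

Lemma scert_eq1 i j : 0 < loss_entry s u i j -> Z i j = 1.
Proof.
move=> pos; apply: (mulIf (lt0r_neq0 pos)).
by rewrite mul1r scert_loss // gtr0_norm.
Qed.

Lemma scert_eqN1 i j : loss_entry s u i j < 0 -> Z i j = -1.
Proof.
move=> neg; apply: (mulIf (ltr0_neq0 neg)).
by rewrite mulN1r scert_loss // ltr0_norm.
Qed.

Lemma scert_opp_sign i j : u i * u j < 0 -> Z i j = -1.
Proof.
move=> neg; apply: scert_eqN1; rewrite /loss_entry.
by have := mulr_ge0 (s_ge0 i) (s_ge0 j); lra.
Qed.

Lemma scert_strict_below l m :
  `|u l| < s l -> `|u m| <= s m -> u m != 0 -> Z l m = -1.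
Proof.
move=> ul um um0; apply: scert_eqN1; rewrite /loss_entry.
have : u l * u m <= `|u l| * `|u m| by rewrite -normrM ler_norm.
have := normr_gt0 (u m); rewrite um0 => um_gt0.
by have := s_ge0 l; nra.
Qed.

Lemma scert_above i m : s i < u i -> 0 < u m -> s m <= u m -> Z i m = 1.
Proof.
move=> ui um_gt0 um; apply: scert_eq1; rewrite /loss_entry.
by have := s_ge0 i; have := s_ge0 m; nra.
Qed.

Lemma scert_sum_ge0 a : 0 < u a -> 0 <= \sum_i u i.
Proof.
move=> ua; rewrite -oppr_le0 -sumrN -[X in _ <= X](scert_ker cert a).
apply: ler_sum => m _.
have [um|um] := ltP (u m) 0; first by rewrite scert_opp_sign ?mulN1r //; nra.
by have /andP[] := scert_bounds a m; nra.
Qed.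

Lemma scert_sum_eq0 j :
  (forall i, `|u i| <= s i) -> `|u j| < s j -> \sum_i u i = 0.
Proof.
move=> u_le uj; apply: oppr_inj.
rewrite oppr0 -sumrN -[RHS](scert_ker cert j); apply: eq_bigr => m _.
have [->|um0] := eqVneq (u m) 0; first by rewrite mulr0 oppr0.
by rewrite scert_strict_below ?mulN1r.
Qed.

Lemma scert_le_of_gt0 i : 0 < u i -> u i <= s i.
Proof.
move=> ui_gt0; rewrite leNgt; apply/negP => ui_gt.
have Zii : Z i i = 1 by apply: scert_above => //; apply: ltW.
have [l /andP[ul_gt0 ul_lt]|] := pickP (fun l => (0 < u l) && (u l < s l)).
  have ul_norm : `|u l| < s l by rewrite gtr0_norm.
  have ul0 : u l != 0 by rewrite gt_eqF.
  have Zll : Z l l = -1 by apply: scert_strict_below => //; apply: ltW.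
  have diff_ge0 m : 0 <= (Z i m - Z l m) * u m.
    have [um|um|->] := ltgtP (u m) 0; last by rewrite mulr0.
      by rewrite !scert_opp_sign ?subrr ?mul0r //; nra.
    have /andP[Zim_ge Zim_le] := scert_bounds i m.
    have /andP[Zlm_ge Zlm_le] := scert_bounds l m.
    have [sm|sm] := leP (s m) (u m); first by rewrite scert_above //; nra.
    have Zlm : Z l m = -1.
      by apply: scert_strict_below; rewrite ?gtr0_norm ?gt_eqF ?ltW.
    by rewrite Zlm; nra.
  have diff_sum : \sum_m (Z i m - Z l m) * u m = 0.
    by under eq_bigr do rewrite mulrBl; rewrite sumrB !(scert_ker cert) subrr.
  have diff_eq0 := psumr_eq0P (fun m _ => diff_ge0 m) diff_sum.
  have := diff_eq0 i isT; have := diff_eq0 l isT.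
  rewrite Zii Zll (scert_sym cert l i); nra.
move=> no_l; have row_ge0 m : 0 <= Z i m * u m.
  have [um|um|->] := ltgtP (u m) 0; last by rewrite mulr0.
    by rewrite scert_opp_sign ?mulN1r ?oppr_ge0 ?ltW //; nra.
  have := no_l m; rewrite um /= => /negbT; rewrite -leNgt => sm.
  by rewrite scert_above // mul1r ltW.
have /(_ i isT) := psumr_eq0P (fun m _ => row_ge0 m) (scert_ker cert i).
by rewrite Zii mul1r => ui0; rewrite ui0 ltxx in ui_gt0.
Qed.

End NonnegativeTarget.

Lemma scert_norm_le (s u : 'I_n -> R) (Z : 'I_n -> 'I_n -> R) :
  (forall i, 0 <= s i) -> sign_certificate s u Z -> forall i, `|u i| <= s i.
Proof.
move=> s_ge0 cert i; have [ui|ui|->] := ltgtP (u i) 0; last by rewrite normr0.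
  rewrite ltr0_norm //.
  apply: (scert_le_of_gt0 s_ge0 (sign_certificate_opp cert) (i := i)).
  by rewrite oppr_gt0.
by rewrite gtr0_norm //; apply: (scert_le_of_gt0 s_ge0 cert (i := i)).
Qed.

Lemma scert_cases (s u : 'I_n -> R) (Z : 'I_n -> 'I_n -> R) :
  (forall i, 0 <= s i) -> sign_certificate s u Z ->
  ((forall i, `|u i| <= s i) /\ \sum_i u i = 0) \/
  (forall i, u i = s i) \/ (forall i, u i = - s i).
Proof.
move=> s_ge0 cert; have u_le := scert_norm_le s_ge0 cert.
have [j /= uj|/= u_eq] := pickP (fun j => `|u j| < s j).
  by left; split; last exact: (scert_sum_eq0 s_ge0 cert (j := j) u_le uj).
have norm_u i : `|u i| = s i by apply/eqP; rewrite eq_le u_le leNgt u_eq.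
have [a /= ua|/= no_pos] := pickP (fun a => 0 < u a); last first.
  by right; right=> i; rewrite -norm_u ler0_norm ?opprK // leNgt no_pos.
have [b /= ub|/= no_neg] := pickP (fun b => u b < 0); last first.
  by right; left=> i; rewrite -norm_u ger0_norm // leNgt no_neg.
left; split=> //; apply/eqP; rewrite eq_le (scert_sum_ge0 s_ge0 cert ua) andbT.
rewrite -oppr_ge0 -sumrN.
apply: (scert_sum_ge0 s_ge0 (sign_certificate_opp cert) (a := b)).
by rewrite oppr_gt0.
Qed.

Lemma scert_constN1 (s u : 'I_n -> R) :
  (forall i, `|u i| <= s i) -> \sum_i u i = 0 ->
  sign_certificate s u (fun _ _ => -1).
Proof.
move=> u_le u_sum; split=> [//|i j|i j|i]; first by rewrite normrN1.
  rewrite mulN1r ler0_norm ?subr_le0 //; apply: le_trans (ler_norm _) _.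
  by rewrite normrM ler_pM.
by under eq_bigr do rewrite mulN1r; rewrite sumrN u_sum oppr0.
Qed.

Lemma scert_const0 (s u : 'I_n -> R) :
  (forall i j, u i * u j = s i * s j) ->
  sign_certificate s u (fun _ _ => 0).
Proof.
move=> uE; split=> [//|i j|i j|i]; first by rewrite normr0.
  by rewrite /loss_entry uE subrr normr0 mul0r.
by rewrite big1 // => j _; rewrite mul0r.
Qed.

Lemma scert_exists_iff (s u : 'I_n -> R) :
  (forall i, 0 <= s i) ->
  (exists Z, sign_certificate s u Z) <->
  ((forall i, `|u i| <= s i) /\ \sum_i u i = 0) \/
  (forall i, u i = s i) \/ (forall i, u i = - s i).
Proof.
move=> s_ge0; split=> [[Z cert]|[[u_le u_sum]|[uE|uE]]].
- exact: scert_cases cert.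
- by exists (fun _ _ => -1); apply: scert_constN1.
- by exists (fun _ _ => 0); apply: scert_const0 => i j; rewrite !uE.
- by exists (fun _ _ => 0); apply: scert_const0 => i j; rewrite !uE mulrNN.
Qed.

End SignCertificate.

Lemma in_SignP (R : realType) (x z : R) :
  in_Sign x z <-> `|z| <= 1 /\ z * x = `|x|.
Proof.
rewrite /in_Sign; have [x_lt0|x_gt0|->] := ltgtP x 0; rewrite /=.
- rewrite ltr0_norm // divrN divff ?ltr0_neq0 //.
  split=> [->|[_ zx]]; first by rewrite normrN1 mulN1r.
  by apply: (mulIf (ltr0_neq0 x_lt0)); rewrite zx mulN1r.
- rewrite gtr0_norm // divff ?lt0r_neq0 //.
  split=> [->|[_ zx]]; first by rewrite normr1 mul1r.
  by apply: (mulIf (lt0r_neq0 x_gt0)); rewrite zx mul1r.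
- by rewrite mulr0 normr0 -ler_norml; split=> [|[]].
Qed.

Lemma lossmxE (R : realType) n (u us : 'cV[R]_n) i j :
  lossmx u us i j = loss_entry (us^~ 0) (u^~ 0) i j.
Proof. by rewrite /lossmx !mxE !big_ord1 !mxE. Qed.

Lemma stationaryP (R : realType) n (us u : 'cV[R]_n) :
  stationary us u <-> exists Z, sign_certificate (us^~ 0) (u^~ 0) Z.
Proof.
split=> [[Z [Zsym [ZSign Zu]]]|[Z cert]].
  exists (fun i j => Z i j); split=> [i j|i j|i j|i].
  - by rewrite -[in LHS]Zsym mxE.
  - by have /in_SignP[] := ZSign i j.
  - by have /in_SignP[_] := ZSign i j; rewrite lossmxE.
  - by have := congr1 (fun M : 'cV[R]_n => M i 0) Zu; rewrite !mxE => <-.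
exists (\matrix_(i, j) Z i j); split; [|split].
- by apply/matrixP => i j; rewrite !mxE (scert_sym cert).
- move=> i j; rewrite lossmxE mxE; apply/in_SignP.
  by split; [exact: (scert_norm cert) | exact: (scert_loss cert)].
- apply/matrixP => i j; rewrite (ord1 j) !mxE -[LHS](scert_ker cert i).
  by apply: eq_bigr => k _; rewrite mxE.
Qed.

Lemma mulr_sign_self (R : realDomainType) (x : R) :
  (-1) ^+ (x < 0)%R * x = `|x|.
Proof. by rewrite -[X in _ * X = _](mulr_sign_norm x) signrMK. Qed.

Lemma stationary_sign_flip (R : realType) n (us u : 'cV[R]_n) :
  stationary us u <-> exists Z, sign_certificate
    (fun i => `|us i 0|) (fun i => (-1) ^+ (us i 0 < 0)%R * u i 0) Z.
Proof.
rewrite stationaryP; split=> -[Z cert]; eexists.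
  by apply: (sign_certificate_flip (b := fun i => us i 0 < 0)) cert => i;
    rewrite ?mulr_sign_self.
by apply: (sign_certificate_flip (b := fun i => us i 0 < 0)) cert => i;
  rewrite ?mulr_sign_norm ?signrMK.
Qed.

Theorem theorem1 (R : realType) (n : nat) (hn : (1 <= n)%N)
  (us : 'cV[R]_n) (hus : us != 0) (u : 'cV[R]_n) :
  stationary us u <->
  (((forall i : 'I_n, `|u i 0| <= `|us i 0|) /\
     \sum_(i < n | us i 0 != 0) Num.sg (us i 0) * u i 0 = 0)
   \/ u = us \/ u = - us).
Proof.
rewrite stationary_sign_flip scert_exists_iff; last by move=> i.
have norm_du i : `|(-1) ^+ (us i 0 < 0)%R * u i 0| = `|u i 0|.
  by rewrite normrM normr_sign mul1r.
have sumE : (forall i, `|u i 0| <= `|us i 0|) ->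
    \sum_(i < n | us i 0 != 0) Num.sg (us i 0) * u i 0 =
    \sum_i (-1) ^+ (us i 0 < 0)%R * u i 0.
  move=> u_le; rewrite big_mkcond; apply: eq_bigr => i _.
  have [us0|us0] := eqVneq (us i 0) 0; last by rewrite neqr0_sign.
  by have := u_le i; rewrite us0 normr0 normr_le0 => /eqP ->; rewrite !mulr0.
have uE (v : 'cV[R]_n) :
    (forall i,
      (-1) ^+ (us i 0 < 0)%R * u i 0 = (-1) ^+ (us i 0 < 0)%R * v i 0) ->
    u = v.
  move=> duv; apply/matrixP => i j; rewrite (ord1 j).
  by rewrite -[LHS](signrMK (us i 0 < 0)%R) duv signrMK.
split=> [[[u_le u_sum]|[u_us|u_us]]|[[u_le u_sum]|[->|->]]].
- have u_le' i : `|u i 0| <= `|us i 0| by rewrite -norm_du.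
  by left; split; last by rewrite sumE.
- by right; left; apply: uE => i; rewrite u_us mulr_sign_self.
- by right; right; apply: uE => i; rewrite u_us mxE mulrN mulr_sign_self.
- by left; split=> [i|]; rewrite ?norm_du // -sumE.
- by right; left => i; rewrite mulr_sign_self.
- by right; right => i; rewrite mxE mulrN mulr_sign_self.
Qed.
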